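(* Let $A>0$, $\phi>0$, $0<\gamma<1$, and $\alpha,\beta>0$ with $\alpha+\beta<1$. For $k,N>0$ define $n^*(k,N)=\frac{1-\alpha}{4\phi kN^{\gamma}}$ and $e^*(k,N)=\frac{2\alpha}{1-\alpha}\phi k^{2}N^{\gamma}$, and the map $F_C(k,N)=\big(A\,e^*(k,N)^{\alpha}k^{\beta},\ n^*(k,N)N\big)$. Let $(\bar k,\bar N)$ be the unique fixed point of $F_C$ with $\bar k,\bar N>0$. Write $\bar e=e^*(\bar k,\bar N)$ and let $$E_k=\frac{\partial e^*}{\partial k}(\bar k,\bar N)=\frac{4\alpha\phi}{1-\alpha}\bar k\bar N^{\gamma},\quad E_N=\frac{\partial e^*}{\partial N}(\bar k,\bar N)=\frac{2\alpha\gamma\phi}{1-\alpha}\bar k^{2}\bar N^{\gamma-1},$$ $$D_k=\frac{\partial n^*}{\partial k}(\bar k,\bar N)=-\frac{1-\alpha}{4\phi\bar k^{2}\bar N^{\gamma}},\quad D_N=\frac{\partial n^*}{\partial N}(\bar k,\bar N)=-\frac{\gamma(1-\alpha)}{4\phi\bar k\bar N^{\gamma+1}}.$$ Suppose $$1-\frac{\alpha\bar e^{\alpha-1}E_N\bar k^{\beta}D_k\bar N}{\alpha\bar e^{\alpha-1}E_k\bar k^{\beta}+\frac{\beta}{A}}-\frac{1}{A\alpha\bar e^{\alpha-1}E_k\bar k^{\beta}+\beta}<-D_N\bar N<1-\frac{A\alpha\bar e^{\alpha-1}E_N\bar k^{\beta}D_k\bar N}{1+A\alpha\bar e^{\alpha-1}E_k\bar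 k^{\beta}+\beta}$$ and $$A\alpha\bar e^{\alpha-1}E_k\bar k^{\beta}+\beta>1.$$ Then $(\bar k,\bar N)$ is locally asymptotically stable, i.e. both eigenvalues of the Jacobian matrix of $F_C$ at $(\bar k,\bar N)$ have modulus strictly less than $1$.
   Context: Overlapping-generations model with human capital $k_t$ and adult population $N_t$, in the case where parental childcare times are perfect complements; $n^*$ and $e^*$ are the household's optimal fertility and education spending and the dynamics are $(k_{t+1},N_{t+1})=F_C(k_t,N_t)$. The fixed point is $\bar k=(A^{1/\alpha}\alpha/2)^{\alpha/(1-\beta-\alpha)}$, $\bar N=\left(\frac{1-\alpha}{4\phi\bar k}\right)^{1/\gamma}$. *)

From HB Require Import structures.
From mathcomp Require Import all_boot all_order all_algebra.
From mathcomp Require Import all_classical all_reals all_analysis.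
From mathcomp Require Import complex.
Set Implicit Arguments. Unset Strict Implicit. Unset Printing Implicit Defensive.
Import Order.TTheory GRing.Theory Num.Theory.
Local Open Scope ring_scope.

Section Model.
Variable R : realType.
Variables (A phi gamma alpha beta : R).

Definition nstar (k N : R) : R := (1 - alpha) / (4 * phi * k * N `^ gamma).
Definition estar (k N : R) : R :=
  (2 * alpha) / (1 - alpha) * phi * k ^+ 2 * N `^ gamma.

Definition FC1 (k N : R) : R := A * (estar k N) `^ alpha * k `^ beta.
Definition FC2 (k N : R) : R := nstar k N * N.

Definition pd_k (f : R -> R -> R) (k N : R) : R := derive1 (fun x => f x N) k.
Definition pd_N (f : R -> R -> R) (k N : R) : R := derive1 (fun y => f k y) N.

Definition jacFC (k N : R) : 'M[R]_2 :=
  \matrix_(i < 2, j < 2)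
    if i == ord0 then (if j == ord0 then pd_k FC1 k N else pd_N FC1 k N)
    else (if j == ord0 then pd_k FC2 k N else pd_N FC2 k N).

Definition Ek (kb Nb : R) : R := 4 * alpha * phi / (1 - alpha) * kb * Nb `^ gamma.
Definition EN (kb Nb : R) : R :=
  2 * alpha * gamma * phi / (1 - alpha) * kb ^+ 2 * Nb `^ (gamma - 1).
Definition Dk (kb Nb : R) : R := - ((1 - alpha) / (4 * phi * kb ^+ 2 * Nb `^ gamma)).
Definition DN (kb Nb : R) : R :=
  - (gamma * (1 - alpha) / (4 * phi * kb * Nb `^ (gamma + 1))).

End Model.

Definition eigen_in_unit_disk (R : realType) (n : nat) (J : 'M[R]_n) : Prop :=
  forall lam : R[i], eigenvalue (map_mx (fun x : R => (x%:C)%C) J) lam -> `|lam| < 1.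

From HB Require Import structures.
From mathcomp Require Import all_boot all_order all_algebra.
From mathcomp Require Import all_classical all_reals all_analysis.
From mathcomp Require Import complex.
From mathcomp Require Import ring lra.
Set Implicit Arguments. Unset Strict Implicit. Unset Printing Implicit Defensive.
Import Order.TTheory GRing.Theory Num.Theory.
Local Open Scope ring_scope.

(* At the fixed point n*(kb, Nb) = 1, i.e. 4 phi kb Nb^gamma = 1 - alpha, and
   e*(kb, Nb) = alpha kb / 2.  Both components of F_C are power products in k
   and N, so each partial derivative is elasticity * value / variable, and
   elasticities add up along products and powers.  Since F_C fixes (kb, Nb),
   the Jacobian there is [[2 alpha + beta, alpha gamma kb / Nb];
   [- Nb / kb, 1 - gamma]], with trace T = 2 alpha + beta + 1 - gamma and
   determinant D = (2 alpha + beta) (1 - gamma) + alpha gamma.  By the Jury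
   criterion both roots of z^2 - T z + D lie in the open unit disk when D < 1,
   1 - T + D > 0 and 1 + T + D > 0.  Here 1 - T + D = gamma (1 - alpha - beta),
   the third condition is automatic, and evaluating Ek, EN, Dk, DN at the fixed
   point turns the lower bound of the hypothesis into D < 1. *)

Lemma mxtrace2 (R : pzSemiRingType) (A : 'M[R]_2) : \tr A = A 0 0 + A 1 1.
Proof.
by rewrite /mxtrace !big_ord_recl big_ord0 addr0; congr (A _ _ + A _ _); apply: val_inj.
Qed.

Lemma det_mx2 (R : comPzRingType) (A : 'M[R]_2) :
  \det A = A 0 0 * A 1 1 - A 0 1 * A 1 0.
Proof.
rewrite (expand_det_row _ 0) !big_ord_recl big_ord0 addr0 /cofactor !det_mx11 !mxE /=.
have -> : lift ord0 ord0 = 1 :> 'I_2 by apply: val_inj.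
have -> : lift 1 0 = 0 :> 'I_2 by apply: val_inj.
have -> : ord0 = 0 :> 'I_2 by apply: val_inj.
rewrite /= expr0 expr1; ring.
Qed.

Lemma char_poly2 (R : comNzRingType) (A : 'M[R]_2) :
  char_poly A = 'X^2 - (\tr A)%:P * 'X + (\det A)%:P.
Proof.
rewrite /char_poly det_mx2 mxtrace2 det_mx2 /char_poly_mx !mxE /=.
rewrite ?rmorphD ?rmorphB ?rmorphM /=.
by rewrite polyCN; ring.
Qed.

Lemma eigenvalue_map_mx2 (R : realType) (J : 'M[R]_2) (lam : R[i]) :
  eigenvalue (map_mx (real_complex R) J) lam ->
  lam ^+ 2 - (\tr J)%:C%C * lam + (\det J)%:C%C = 0.
Proof.
rewrite eigenvalue_root_char char_poly2 trace_map_mx det_map_mx => /rootP.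
by rewrite !hornerE.
Qed.

Lemma real_quad_root_sqr_lt1 (R : realFieldType) (T D x : R) :
  D < 1 -> 0 < 1 - T + D -> 0 < 1 + T + D ->
  x ^+ 2 - T * x + D = 0 -> x ^+ 2 < 1.
Proof.
move=> hD h1 h2 hx.
have lt1 : x < 1.
  rewrite ltNge; apply/negP => x_ge1.
  have : x * (1 - T + D) = - ((x - 1) * (x - D)) by rewrite -[RHS]addr0 -hx; ring.
  nra.
have gtN1 : -1 < x.
  rewrite ltNge; apply/negP => x_leN1.
  have : x * (1 + T + D) = (x + 1) * (x + D) by rewrite -[RHS]subr0 -hx; ring.
  nra.
nra.
Qed.

Lemma quad_root_norm_lt1 (R : rcfType) (T D : R) (lam : R[i]) :
  D < 1 -> 0 < 1 - T + D -> 0 < 1 + T + D ->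
  lam ^+ 2 - T%:C%C * lam + D%:C%C = 0 -> `|lam| < 1.
Proof.
move=> hD h1 h2; case: lam => x y.
rewrite expr2; simpc => /eqP; rewrite eq_complex /= => /andP[/eqP re /eqP im].
rewrite -sqrtr1 ltr_sqrt ?ltr01 //.
have [y0 | y_neq0] := eqVneq y 0.
  subst y; rewrite expr0n addr0; apply: (real_quad_root_sqr_lt1 hD h1 h2).
  by rewrite -re expr2; ring.
(* a non-real root comes with its conjugate, so Re lam = T / 2 and |lam|^2 = D *)
have tr : T = x *+ 2.
  apply/eqP; rewrite eq_sym -subr_eq0 -(mulIr_eq0 _ (mulIf y_neq0)).
  by rewrite -im; apply/eqP; ring.
suff -> : x ^+ 2 + y ^+ 2 = D by [].
by rewrite -[RHS]subr0 -re tr; ring.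
Qed.

Lemma eigen_in_unit_disk_mx2 (R : realType) (J : 'M[R]_2) :
  \det J < 1 -> 0 < 1 - \tr J + \det J -> 0 < 1 + \tr J + \det J ->
  eigen_in_unit_disk J.
Proof. by move=> hD h1 h2 lam /eigenvalue_map_mx2; apply: quad_root_norm_lt1. Qed.

Lemma powRB1 (R : realType) (x a : R) : 0 < x -> x `^ (a - 1) = x `^ a / x.
Proof. by move=> x_gt0; rewrite powRB ?(gt_eqF x_gt0) ?implybT // powRr1 // ltW. Qed.

Lemma powRD1 (R : realType) (x a : R) : 0 < x -> x `^ (a + 1) = x `^ a * x.
Proof. by move=> x_gt0; rewrite powRD ?(gt_eqF x_gt0) ?implybT // powRr1 // ltW. Qed.

Section Elasticity.
Context {R : realType}.
Implicit Types (f g : R -> R) (x a e : R).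

Definition has_elasticity f x e := is_derive x 1 f (e * f x / x).

Lemma has_elasticity_eq f x e e' :
  has_elasticity f x e -> e = e' -> has_elasticity f x e'.
Proof. by move=> ? <-. Qed.

Lemma derive1_elasticity f x e : has_elasticity f x e -> derive1 f x = e * f x / x.
Proof. by rewrite /has_elasticity => df; rewrite derive1E derive_val. Qed.

Lemma elasticity_cst (c x : R) : has_elasticity (fun=> c) x 0.
Proof. by rewrite /has_elasticity !mul0r; apply: is_derive_cst. Qed.

Lemma elasticity_id x : x != 0 -> has_elasticity id x 1.
Proof. by move=> x_neq0; rewrite /has_elasticity mul1r divff //; apply: is_derive_id. Qed.

Lemma elasticityM f g x a b : has_elasticity f x a -> has_elasticity g x b ->
  has_elasticity (fun y => f y * g y) x (a + b).
Proof.
rewrite /has_elasticity => df dg; apply: (is_derive_eq (is_deriveM df dg)).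
by rewrite /GRing.scale /=; ring.
Qed.

Lemma elasticityV f x a : has_elasticity f x a -> f x != 0 ->
  has_elasticity (fun y => (f y)^-1) x (- a).
Proof.
rewrite /has_elasticity => df fx_neq0; apply: (is_derive_eq (is_deriveV fx_neq0 df)).
by rewrite /GRing.scale /= [LHS]mulrA; congr (_ / x); field.
Qed.

Lemma elasticityX f x a n : has_elasticity f x a ->
  has_elasticity (fun y => f y ^+ n) x (n%:R * a).
Proof.
rewrite /has_elasticity -exprfctE => df; apply: (is_derive_eq (is_deriveX n df)).
rewrite /GRing.scale /= [LHS]mulrA; congr (_ / x).
by case: n => [|n]; rewrite ?mul0r //= exprS; ring.
Qed.

Lemma elasticity_powR f x e a : has_elasticity f x e -> 0 < f x ->
  has_elasticity (fun y => f y `^ a) x (a * e).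
Proof.
rewrite /has_elasticity => df fx_gt0.
apply: (is_derive_eq (is_derive1_comp (is_derive1_powR a fx_gt0) df)).
have fx_neq0 : f x != 0 by rewrite gt_eqF.
by rewrite powRB1 // [LHS]mulrA; congr (_ / x); field.
Qed.

End Elasticity.

Section ModelElasticities.
Variables (R : realType) (A phi gamma alpha beta k N : R).
Hypotheses (phi_gt0 : 0 < phi) (alpha_gt0 : 0 < alpha) (alpha_lt1 : alpha < 1).
Hypotheses (k_gt0 : 0 < k) (N_gt0 : 0 < N).

Let k_neq0 : k != 0. Proof. exact: lt0r_neq0. Qed.
Let N_neq0 : N != 0. Proof. exact: lt0r_neq0. Qed.

Lemma estar_gt0 : 0 < estar phi gamma alpha k N.
Proof.
by rewrite /estar !mulr_gt0 ?exprn_gt0 ?powR_gt0 ?invr_gt0 ?subr_gt0.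
Qed.

Lemma estar_elasticity_k : has_elasticity (estar phi gamma alpha ^~ N) k 2.
Proof.
apply: (has_elasticity_eq (elasticityM (elasticityM (elasticity_cst _ _)
  (elasticityX 2 (elasticity_id k_neq0))) (elasticity_cst _ _))).
ring.
Qed.

Lemma estar_elasticity_N : has_elasticity (estar phi gamma alpha k) N gamma.
Proof.
apply: (has_elasticity_eq (elasticityM (elasticity_cst _ _)
  (elasticity_powR gamma (elasticity_id N_neq0) N_gt0))).
ring.
Qed.

Lemma FC1_elasticity_k :
  has_elasticity (FC1 A phi gamma alpha beta ^~ N) k (2 * alpha + beta).
Proof.
apply: (has_elasticity_eq (elasticityM (elasticityM (elasticity_cst _ _)
  (elasticity_powR alpha estar_elasticity_k estar_gt0))
  (elasticity_powR beta (elasticity_id k_neq0) k_gt0))).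
ring.
Qed.

Lemma FC1_elasticity_N :
  has_elasticity (FC1 A phi gamma alpha beta k) N (alpha * gamma).
Proof.
apply: (has_elasticity_eq (elasticityM (elasticityM (elasticity_cst _ _)
  (elasticity_powR alpha estar_elasticity_N estar_gt0)) (elasticity_cst _ _))).
ring.
Qed.

Let denom_neq0 : 4 * phi * k * N `^ gamma != 0.
Proof. by rewrite lt0r_neq0 // !mulr_gt0 ?powR_gt0. Qed.

Lemma FC2_elasticity_k : has_elasticity (FC2 phi gamma alpha ^~ N) k (-1).
Proof.
apply: (has_elasticity_eq (elasticityM (elasticityM (elasticity_cst _ _)
  (elasticityV (elasticityM (elasticityM (elasticity_cst _ _)
     (elasticity_id k_neq0)) (elasticity_cst _ _)) denom_neq0)) (elasticity_cst _ _))).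
ring.
Qed.

Lemma FC2_elasticity_N : has_elasticity (FC2 phi gamma alpha k) N (1 - gamma).
Proof.
apply: (has_elasticity_eq (elasticityM (elasticityM (elasticity_cst _ _)
  (elasticityV (elasticityM (elasticity_cst _ _)
     (elasticity_powR gamma (elasticity_id N_neq0) N_gt0)) denom_neq0))
  (elasticity_id N_neq0))).
ring.
Qed.

End ModelElasticities.

Section FixedPoint.
Variables (R : realType) (A phi gamma alpha beta kb Nb : R).
Hypotheses (A_gt0 : 0 < A) (phi_gt0 : 0 < phi) (alpha_gt0 : 0 < alpha)
  (alpha_lt1 : alpha < 1) (beta_gt0 : 0 < beta) (kb_gt0 : 0 < kb) (Nb_gt0 : 0 < Nb).
Hypotheses (fixed_k : FC1 A phi gamma alpha beta kb Nb = kb)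
  (fixed_N : FC2 phi gamma alpha kb Nb = Nb).

Let kb_neq0 : kb != 0. Proof. exact: lt0r_neq0. Qed.
Let Nb_neq0 : Nb != 0. Proof. exact: lt0r_neq0. Qed.
Let Ng_gt0 : 0 < Nb `^ gamma. Proof. exact: powR_gt0. Qed.

Let alpha1_neq0 : 1 - alpha != 0. Proof. by rewrite subr_eq0 gt_eqF. Qed.
Let A_neq0 : A != 0. Proof. exact: lt0r_neq0. Qed.
Let alpha_neq0 : alpha != 0. Proof. exact: lt0r_neq0. Qed.
Let ab_neq0 : 2 * alpha + beta != 0. Proof. by rewrite gt_eqF // addr_gt0 ?mulr_gt0. Qed.

Lemma nstar_fixed : nstar phi gamma alpha kb Nb = 1.
Proof. by apply: (mulIf Nb_neq0); rewrite mul1r. Qed.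

Lemma phi_fixed : phi = (1 - alpha) / (4 * kb * Nb `^ gamma).
Proof.
by rewrite (divr1_eq nstar_fixed); field; rewrite kb_neq0 gt_eqF.
Qed.

Lemma estar_fixed : estar phi gamma alpha kb Nb = alpha * kb / 2.
Proof. by rewrite /estar phi_fixed; field; rewrite alpha1_neq0 kb_neq0 gt_eqF. Qed.

Lemma estar_powR_fixed :
  estar phi gamma alpha kb Nb `^ (alpha - 1) * kb `^ beta = 2 / (alpha * A).
Proof.
have fixed := fixed_k; rewrite /FC1 estar_fixed in fixed.
have e_gt0 : 0 < alpha * kb / 2 by rewrite !mulr_gt0.
have kbb_gt0 : 0 < kb `^ beta by rewrite powR_gt0.
rewrite estar_fixed powRB1 //.
have -> : (alpha * kb / 2) `^ alpha = kb / (A * kb `^ beta).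
  by rewrite -{2}fixed; field; rewrite !gt_eqF.
by field; rewrite !gt_eqF.
Qed.

Lemma Ek_fixed : Ek phi gamma alpha kb Nb = alpha.
Proof. by rewrite /Ek phi_fixed; field; rewrite alpha1_neq0 kb_neq0 gt_eqF. Qed.

Lemma EN_fixed : EN phi gamma alpha kb Nb = alpha * gamma * kb / (2 * Nb).
Proof.
by rewrite /EN powRB1 // phi_fixed; field; rewrite alpha1_neq0 kb_neq0 Nb_neq0 gt_eqF.
Qed.

Lemma Dk_fixed : Dk phi gamma alpha kb Nb = - kb^-1.
Proof. by rewrite /Dk phi_fixed; field; rewrite alpha1_neq0 kb_neq0 gt_eqF. Qed.

Lemma DN_fixed : DN phi gamma alpha kb Nb = - (gamma / Nb).
Proof.
by rewrite /DN powRD1 // phi_fixed; field; rewrite alpha1_neq0 kb_neq0 Nb_neq0 gt_eqF.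
Qed.

Lemma lower_bound_fixed :
  let eb := estar phi gamma alpha kb Nb in
  let X := alpha * eb `^ (alpha - 1) * Ek phi gamma alpha kb Nb * kb `^ beta in
  1 - (alpha * eb `^ (alpha - 1) * EN phi gamma alpha kb Nb * kb `^ beta
         * Dk phi gamma alpha kb Nb * Nb) / (X + beta / A) - 1 / (A * X + beta)
  = 1 - (1 - alpha * gamma) / (2 * alpha + beta).
Proof.
move=> eb X.
have pb : eb `^ (alpha - 1) * kb `^ beta = 2 / (alpha * A) := estar_powR_fixed.
have -> : X = 2 * alpha / A.
  rewrite /X Ek_fixed.
  transitivity (alpha * alpha * (eb `^ (alpha - 1) * kb `^ beta)); first ring.
  by rewrite pb; field; rewrite !gt_eqF.
rewrite EN_fixed Dk_fixed.
transitivity (1 + alpha * alpha * gamma / 2 * (eb `^ (alpha - 1) * kb `^ beta)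
  / (2 * alpha / A + beta / A) - 1 / (A * (2 * alpha / A) + beta)).
  by field; rewrite A_neq0 ab_neq0 kb_neq0 Nb_neq0.
by rewrite pb; field; rewrite A_neq0 ab_neq0 alpha_neq0.
Qed.

Let pd_k_FC1_fixed : pd_k (FC1 A phi gamma alpha beta) kb Nb = 2 * alpha + beta.
Proof.
rewrite /pd_k (derive1_elasticity
  (FC1_elasticity_k A gamma beta phi_gt0 alpha_gt0 alpha_lt1 kb_gt0 Nb_gt0)).
by rewrite fixed_k mulfK.
Qed.

Let pd_N_FC1_fixed : pd_N (FC1 A phi gamma alpha beta) kb Nb = alpha * gamma * kb / Nb.
Proof.
by rewrite /pd_N (derive1_elasticity
  (FC1_elasticity_N A gamma beta phi_gt0 alpha_gt0 alpha_lt1 kb_gt0 Nb_gt0)) fixed_k.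
Qed.

Let pd_k_FC2_fixed : pd_k (FC2 phi gamma alpha) kb Nb = - Nb / kb.
Proof.
rewrite /pd_k (derive1_elasticity
  (FC2_elasticity_k gamma alpha phi_gt0 kb_gt0 Nb_gt0)) fixed_N.
by rewrite mulN1r.
Qed.

Let pd_N_FC2_fixed : pd_N (FC2 phi gamma alpha) kb Nb = 1 - gamma.
Proof.
by rewrite /pd_N (derive1_elasticity
  (FC2_elasticity_N gamma alpha phi_gt0 kb_gt0 Nb_gt0)) fixed_N mulfK.
Qed.

Lemma mxtrace_jacFC_fixed :
  \tr (jacFC A phi gamma alpha beta kb Nb) = 2 * alpha + beta + (1 - gamma).
Proof. by rewrite mxtrace2 !mxE /= pd_k_FC1_fixed pd_N_FC2_fixed. Qed.

Lemma det_jacFC_fixed :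
  \det (jacFC A phi gamma alpha beta kb Nb) =
  (2 * alpha + beta) * (1 - gamma) + alpha * gamma.
Proof.
rewrite det_mx2 !mxE /= pd_k_FC1_fixed pd_N_FC1_fixed pd_k_FC2_fixed pd_N_FC2_fixed.
by field; rewrite kb_neq0 Nb_neq0.
Qed.

End FixedPoint.

Theorem proposition4 (R : realType) (A phi gamma alpha beta kb Nb : R) :
  0 < A -> 0 < phi -> 0 < gamma -> gamma < 1 -> 0 < alpha -> 0 < beta ->
  alpha + beta < 1 ->
  0 < kb -> 0 < Nb ->
  FC1 A phi gamma alpha beta kb Nb = kb ->
  FC2 phi gamma alpha kb Nb = Nb ->
  let eb := estar phi gamma alpha kb Nb in
  let ek := Ek phi gamma alpha kb Nb in
  let eN := EN phi gamma alpha kb Nb in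
  let dk := Dk phi gamma alpha kb Nb in
  let dN := DN phi gamma alpha kb Nb in
  let X := alpha * eb `^ (alpha - 1) * ek * kb `^ beta in
  1 - (alpha * eb `^ (alpha - 1) * eN * kb `^ beta * dk * Nb) / (X + beta / A)
    - 1 / (A * X + beta) < - dN * Nb ->
  - dN * Nb < 1 - (A * alpha * eb `^ (alpha - 1) * eN * kb `^ beta * dk * Nb)
                    / (1 + A * X + beta) ->
  A * X + beta > 1 ->
  eigen_in_unit_disk (jacFC A phi gamma alpha beta kb Nb).
Proof.
move=> A_gt0 phi_gt0 gamma_gt0 gamma_lt1 alpha_gt0 beta_gt0 ab_lt1 kb_gt0 Nb_gt0
  fixed_k fixed_N eb ek eN dk dN X lower _ _.
have alpha_lt1 : alpha < 1 by lra.
move: lower; rewrite /X /eb /ek /eN /dk /dN lower_bound_fixed // DN_fixed //.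
rewrite opprK divfK ?gt_eqF // => lower.
have det_lt1 : (2 * alpha + beta) * (1 - gamma) + alpha * gamma < 1.
  have ab_gt0 : 0 < 2 * alpha + beta by lra.
  have : 1 - gamma < (1 - alpha * gamma) / (2 * alpha + beta) by lra.
  rewrite ltr_pdivlMr //; lra.
apply: eigen_in_unit_disk_mx2;
  rewrite ?mxtrace_jacFC_fixed ?det_jacFC_fixed //.
- have : 0 < gamma * (1 - alpha - beta) by rewrite mulr_gt0 //; lra.
  nra.
- have : 0 < (2 * alpha + beta) * (1 - gamma) by rewrite mulr_gt0 //; lra.
  have : 0 < alpha * gamma by rewrite mulr_gt0.
  nra.
Qed.
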